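(* Let $N\ge0$ be an integer and $a,b,c$ complex numbers such that $N+c-a-b\ne0$ and all denominators below are nonzero. Then \[ {}_{2}F_{1}^{[N]}\left(\begin{matrix}a,b\\ c\end{matrix};\frac{N}{N+c-a-b}\right) =\frac{(c-a)_{N}(c-b)_{N}}{(c)_{N}(c-a-b)_{N}}. \]
   Context: $(x)_m=x(x+1)\cdots(x+m-1)$ is the rising factorial, $(x)_0=1$. For $N\ge0$, \[ {}_{2}F_{1}^{[N]}\left(\begin{matrix}a,b\\ c\end{matrix};z\right)=\sum_{m=0}^{N}\frac{(a)_m(b)_m}{(c)_m\, m!}\,\frac{(N+1-m)_m}{(Nz^{-1}-m)_m}. \] *)

From HB Require Import structures.
From mathcomp Require Import all_boot all_order all_algebra.
From mathcomp Require Export complex.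
From mathcomp Require Export reals.
Set Implicit Arguments. Unset Strict Implicit. Unset Printing Implicit Defensive.
Import Order.TTheory GRing.Theory Num.Theory.
Local Open Scope ring_scope.

Definition rfact {F : fieldType} (x : F) (m : nat) : F :=
  \prod_(i < m) (x + i%:R).

Definition F21N {F : fieldType} (N : nat) (a b c z : F) : F :=
  \sum_(m < N.+1)
    (rfact a m * rfact b m) / (rfact c m * m`!%:R)
    * (rfact ((N.+1 - m)%:R) m / rfact (N%:R / z - m%:R) m).

(* Since (c)_N = (c)_m (c+m)_(N-m) and (c-a-b)_N = (c-a-b)_(N-m) (N+c-a-b-m)_m,
   the m-th term of the truncated series at z = N/(N+c-a-b), multiplied by
   (c)_N (c-a-b)_N, is the m-th term of the terminating Pfaff-Saalschutz sum
     S(N) = sum_m C(N,m) (a)_m (b)_m (c+m)_(N-m) (c-a-b)_(N-m) = (c-a)_N (c-b)_N.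
   The latter holds in any field: termwise, S(N+1) = (c-a+N)(c-b+N) S(N) holds
   up to a telescoping correction (a WZ-style certificate). *)
From HB Require Import structures.
From mathcomp Require Import all_boot all_order all_algebra.
From mathcomp Require Import complex reals.
From mathcomp Require Import ring.
Set Implicit Arguments.
Unset Strict Implicit.
Unset Printing Implicit Defensive.

Import Order.TTheory GRing.Theory Num.Theory.
Local Open Scope ring_scope.
Local Open Scope complex_scope.

Section RisingFactorial.
Variable F : fieldType.
Implicit Types (x : F) (m n p q : nat).

Lemma rfact0 x : rfact x 0 = 1.
Proof. by rewrite /rfact big_ord0. Qed.

Lemma rfactSr x n : rfact x n.+1 = rfact x n * (x + n%:R).
Proof. by rewrite /rfact big_ord_recr. Qed.

Lemma rfactS x n : rfact x n.+1 = x * rfact (x + 1) n.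
Proof.
rewrite /rfact big_ord_recl addr0; congr (_ * _).
by apply: eq_bigr => i _; rewrite /bump /= natrD addrA.
Qed.

Lemma rfactD x p q : rfact x (p + q) = rfact x p * rfact (x + p%:R) q.
Proof.
elim: q => [|q IHq]; first by rewrite addn0 rfact0 mulr1.
by rewrite addnS !rfactSr IHq natrD addrA mulrA.
Qed.

Lemma rfact_nat n m : rfact (n.+1%:R : F) m = ((n + m) ^_ m)%:R.
Proof.
elim: m => [|m IHm]; first by rewrite rfact0.
by rewrite rfactSr IHm addnS ffactSS -natrD -natrM mulnC addSn.
Qed.

End RisingFactorial.

Section PfaffSaalschutz.
Variables (F : fieldType) (a b c : F).

Definition saalschutz_term N m : F :=
  'C(N, m)%:R * rfact a m * rfact b m
  * rfact (c + m%:R) (N - m) * rfact (c - a - b) (N - m).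

Definition saalschutz_cert N m : F :=
  if m is k.+1 then - ((a + k%:R) * (b + k%:R) * saalschutz_term N k) else 0.

Lemma saalschutz_term_small N m : (N < m)%N -> saalschutz_term N m = 0.
Proof. by move=> ltNm; rewrite /saalschutz_term bin_small // !mul0r. Qed.

Lemma saalschutz_step_interior k j (N := (k + j).+1) :
  saalschutz_term N.+1 k.+1 =
    (c - a + N%:R) * (c - b + N%:R) * saalschutz_term N k.+1
    + (saalschutz_cert N k.+2 - saalschutz_cert N k.+1).
Proof.
have N1_k1 : (N.+1 - k.+1 = j.+1)%N by rewrite subSS /N -addnS addKn.
have N_k1 : (N - k.+1 = j)%N by rewrite subSS addKn.
have N_k : (N - k = j.+1)%N by rewrite /N -addnS addKn.
rewrite /saalschutz_cert /saalschutz_term N1_k1 N_k1 N_k binS.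
rewrite (rfactS (c + k%:R)) -[c + k%:R + 1]addrA natr1 !rfactSr.
(* Pascal's rule splits C(N+1,k+1) into P + Q; the recurrence then holds only
   modulo (k+1) P = (j+1) Q, hence the factorisation below. *)
set P := 'C(N, k.+1)%:R; set Q := 'C(N, k)%:R.
have PQ : k.+1%:R * P = j.+1%:R * Q by rewrite -!natrM mul_bin_left N_k.
apply/eqP; rewrite -subr_eq0; apply/eqP.
transitivity (rfact a k * (a + k%:R) * rfact b k * (b + k%:R)
  * rfact (c + k.+1%:R) j * rfact (c - a - b) j * (c - a - b + j%:R)
  * (j.+1%:R * Q - k.+1%:R * P)); first by rewrite /N; ring.
by rewrite PQ subrr mulr0.
Qed.

Lemma saalschutz_term_step N m :
  saalschutz_term N.+1 m =
    (c - a + N%:R) * (c - b + N%:R) * saalschutz_term N m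
    + (saalschutz_cert N m.+1 - saalschutz_cert N m).
Proof.
rewrite /saalschutz_cert; case: m => [|k].
  by rewrite /saalschutz_term !bin0 !subn0 !rfact0 addr0 !rfactSr; ring.
case: (ltngtP k N) => [ltkN | ltNk | ->].
- have [j ->] : exists j, N = (k + j).+1.
    by exists (N - k.+1)%N; rewrite -addnS subnSK // subnKC // ltnW.
  exact: saalschutz_step_interior.
- have ltNk1 : (N < k.+1)%N by rewrite ltnS ltnW.
  by rewrite !saalschutz_term_small //; ring.
- rewrite !(saalschutz_term_small (ltnSn N)) /saalschutz_term.
  by rewrite !binn !subnn !rfact0 !rfactSr; ring.
Qed.

Lemma saalschutz_sum N :
  \sum_(m < N.+1) saalschutz_term N m = rfact (c - a) N * rfact (c - b) N.
Proof.
elim: N => [|N IHN].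
  by rewrite big_ord1 /saalschutz_term bin0 subnn !rfact0 !mulr1.
under eq_bigr do rewrite saalschutz_term_step.
rewrite big_split /= -mulr_sumr big_ord_recr /= saalschutz_term_small // addr0.
rewrite IHN -(big_mkord xpredT (fun m => saalschutz_cert N m.+1 - saalschutz_cert N m)).
rewrite telescope_sumr //= saalschutz_term_small //.
by rewrite !rfactSr; ring.
Qed.

End PfaffSaalschutz.

Section TruncatedHypergeometric.
Variables (F : fieldType) (a b c : F).
Hypothesis F_char0 : [pchar F] =i pred0.

Lemma F21N_saalschutz N z :
    N%:R / z = N%:R + c - a - b -> rfact c N != 0 -> rfact (c - a - b) N != 0 ->
  F21N N a b c z =
    rfact (c - a) N * rfact (c - b) N / (rfact c N * rfact (c - a - b) N).
Proof.
move=> Nz cN_neq0 sN_neq0; rewrite /F21N Nz -saalschutz_sum mulr_suml.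
apply: eq_bigr => -[m /=]; rewrite ltnS => le_mN _.
have split_c : rfact c N = rfact c m * rfact (c + m%:R) (N - m).
  by rewrite -rfactD subnKC.
have split_s : rfact (c - a - b) N =
    rfact (c - a - b) (N - m) * rfact (N%:R + c - a - b - m%:R) m.
  have -> : N%:R + c - a - b - m%:R = c - a - b + (N - m)%:R.
    by rewrite natrB //; ring.
  by rewrite -rfactD subnK.
have ffactN : rfact (N.+1 - m)%:R m = ('C(N, m) * m`!)%:R :> F.
  by rewrite subSn // rfact_nat subnK // bin_ffact.
have fact_neq0 : m`!%:R != 0 :> F.
  by rewrite ((pcharf0P F).1 F_char0) -lt0n fact_gt0.
move: cN_neq0 sN_neq0; rewrite split_c split_s !mulf_eq0 !negb_or.
move=> /andP[cm_neq0 cNm_neq0] /andP[sNm_neq0 wm_neq0].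
rewrite ffactN /saalschutz_term natrM; field.
by rewrite cm_neq0 cNm_neq0 sNm_neq0 wm_neq0 fact_neq0.
Qed.

End TruncatedHypergeometric.

Theorem corollary4p1 (R : realType) (N : nat) (a b c : R[i]) :
  N%:R + c - a - b != 0 ->
  (forall m : nat, (m <= N)%N -> rfact c m != 0) ->
  (forall m : nat, (m <= N)%N ->
     rfact (N%:R / (N%:R / (N%:R + c - a - b)) - m%:R) m != 0) ->
  rfact (c - a - b) N != 0 ->
  F21N N a b c (N%:R / (N%:R + c - a - b)) =
  (rfact (c - a) N * rfact (c - b) N) / (rfact c N * rfact (c - a - b) N).
Proof.
move=> w_neq0 c_neq0 _ s_neq0.
case: N w_neq0 c_neq0 s_neq0 => [|N] w_neq0 c_neq0 s_neq0.
  by rewrite /F21N big_ord1 !rfact0 !(mul1r, mulr1, invr1).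
apply: F21N_saalschutz => //.
- exact: pchar_num.
- by rewrite invf_div mulrC divfK // pnatr_eq0.
- exact: c_neq0.
Qed.
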